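(* Let $K$ be a field of characteristic zero and $n\ge3$. Let $i\in\{1,3,5,\dots,n-2\}$ if $n$ is odd, or $i\in\{2,4,6,\dots,n-2\}$ if $n$ is even. Then there exists a filiform Lie algebra $\mathfrak{g}$ over $K$ of dimension $n$ with $\chi(\mathfrak{g})=i$.
   Context: A filiform Lie algebra of dimension $n$ is a nilpotent Lie algebra with $\dim\mathfrak{g}^k=n-k$ for $2\le k\le n$ (lower central series $\mathfrak{g}^1=\mathfrak{g}$, $\mathfrak{g}^{k+1}=[\mathfrak{g},\mathfrak{g}^k]$). For $\ell\in\mathfrak{g}^*$, $\mathfrak{g}(\ell)=\{y\in\mathfrak{g}\mid\ell([x,y])=0\ \forall x\in\mathfrak{g}\}$ and $\chi(\mathfrak{g})=\min_{\ell\in\mathfrak{g}^*}\dim\mathfrak{g}(\ell)$. *)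

From HB Require Import structures.
From mathcomp Require Import all_boot all_order all_algebra.
Set Implicit Arguments. Unset Strict Implicit. Unset Printing Implicit Defensive.
Import GRing.Theory.
Local Open Scope ring_scope.

(* An n-dimensional Lie algebra over K is represented (up to isomorphism) by
   a bracket on the coordinate space K^n = 'rV[K]_n. *)
Section LieDefs.
Variables (K : fieldType) (n : nat).
Local Notation V := 'rV[K]_n.

Definition is_lie_bracket (br : V -> V -> V) : Prop :=
  [/\ (forall (a : K) (x y z : V), br (a *: x + y) z = a *: br x z + br y z),
      (forall (a : K) (x y z : V), br z (a *: x + y) = a *: br z x + br z y),
      (forall x : V, br x x = 0)
    & (forall x y z : V, br x (br y z) + br y (br z x) + br z (br x y) = 0)].

(* [g, W] for a subspace W (given as the row space of a matrix): the span of
   all brackets [x, y], x in g, y in W; by bilinearity it is spanned by the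
   brackets of the standard basis vectors with the rows of W. *)
Definition bracket_space (br : V -> V -> V) (W : 'M[K]_n) : 'M[K]_n :=
  (\sum_(i < n) \sum_(j < n) <<br (delta_mx 0 i) (row j W)>>)%MS.

(* lower central series, indexed from 1: lcs 1 = g, lcs (k+1) = [g, lcs k].
   (lcs 0 is also set to g, it is never used.) *)
Fixpoint lcs (br : V -> V -> V) (k : nat) : 'M[K]_n :=
  match k with
  | 0 => 1%:M
  | 1 => 1%:M
  | k'.+1 => bracket_space br (lcs br k')
  end.

Definition nilpotent_lie (br : V -> V -> V) : Prop :=
  exists k, \rank (lcs br k) = 0%N.

Definition filiform (br : V -> V -> V) : Prop :=
  nilpotent_lie br /\
  forall k, (2 <= k <= n)%N -> \rank (lcs br k) = (n - k)%N.

(* A linear form l on g is represented by a column vector: l(x) = x *m l.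
   stab_dim br l d : the subspace g(l) = {y | l([x,y]) = 0 for all x}
   has dimension d. *)
Definition stab_dim (br : V -> V -> V) (l : 'cV[K]_n) (d : nat) : Prop :=
  exists S : 'M[K]_n,
    (forall y : V, (y <= S)%MS <-> (forall x : V, br x y *m l = 0)) /\
    \rank S = d.

Definition chi_eq (br : V -> V -> V) (c : nat) : Prop :=
  (exists l, stab_dim br l c) /\
  (forall l d, stab_dim br l d -> (c <= d)%N).
End LieDefs.

From HB Require Import structures.
From mathcomp Require Import all_boot all_order all_algebra.
From mathcomp Require Import ring zify.
Set Implicit Arguments. Unset Strict Implicit. Unset Printing Implicit Defensive.
Import GRing.Theory.
Local Open Scope ring_scope.

(* Let L be the model filiform algebra on e_0, ..., e_{n-1}, with
   [e_0, e_a] = e_{a+1} for 1 <= a <= n-2, and let w be the alternating form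
   with w(e_a, e_b) = (-1)^a when a, b >= 1 and a + b = 2m - 1.  Adding the
   central term w(x, y) e_{n-1} to the bracket of L keeps it a Lie bracket and
   does not change the lower central series, which is still spanned by
   e_k, ..., e_{n-1}; so the result is filiform.  For l in g^*, g(l) is the
   kernel of the alternating form (x, y) |-> l([x, y]), whose matrix is a rank
   two term coming from ad e_0 plus l(e_{n-1}) w, and w has rank 2m - 2.  Hence
   dim g(l) >= n - 2m, with equality for l = e_{n-1}^*, and 2m = n - i gives
   chi(g) = i. *)

Lemma big_ord_indicator (R : comNzRingType) (q t : nat) (F : nat -> R) :
  \sum_(k < q) ((k == t :> nat)%:R * F k) = (t < q)%N%:R * F t.
Proof.
elim: q => [|q IH]; first by rewrite big_ord0 ltn0 mul0r.
rewrite big_ord_recr /= IH ltnS.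
by case: (ltngtP t q) => [h|h|->]; rewrite ?eqxx /=; ring.
Qed.

Section CoordinateSubspaces.
Variables (K : fieldType) (n : nat).
Implicit Types v : 'rV[K]_n.

Lemma mul_pid_mxE v k (j : 'I_n) :
  (v *m (pid_mx k : 'M[K]_n)) 0 j = (j < k)%N%:R * v 0 j.
Proof.
rewrite mxE (bigD1 j) //= big1 ?addr0; first by rewrite mxE eqxx /=; ring.
by move=> c hc; rewrite mxE (_ : (c == j :> nat) = false) ?mulr0 //; exact: negbTE.
Qed.

Lemma sub_copid_mxP k v : (k <= n)%N ->
  reflect (forall j : 'I_n, (j < k)%N -> v 0 j = 0) (v <= copid_mx k)%MS.
Proof.
move=> hk; apply: (iffP idP) => [/submxP [D ->{v}] j hj | hv].
  have : (D *m copid_mx k *m (pid_mx k : 'M[K]_n)) 0 j = 0.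
    by rewrite -mulmxA mul_copid_mx_pid // mulmx0 mxE.
  by rewrite mul_pid_mxE hj mul1r.
have vpid : v *m (pid_mx k : 'M[K]_n) = 0.
  apply/rowP => j; rewrite mul_pid_mxE mxE.
  by case: ltnP => [/hv ->|_]; rewrite ?mulr0 ?mul0r.
by rewrite -[v]mulmx1 -[1%:M](subrK (pid_mx k)) mulmxDr vpid addr0 submxMl.
Qed.

Lemma delta_sub_copid_mx k (j : 'I_n) : (k <= n)%N -> (k <= j)%N ->
  ((delta_mx 0 j : 'rV[K]_n) <= copid_mx k)%MS.
Proof.
move=> hk hj; apply/sub_copid_mxP => // s hs; rewrite mxE /=.
by rewrite (_ : s == j = false) //; apply/negbTE; rewrite -val_eqE /= neq_ltn (leq_trans hs hj).
Qed.

Lemma support_submx m (X : 'M[K]_(m, n)) v :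
  (forall j : 'I_n, v 0 j != 0 -> ((delta_mx 0 j : 'rV[K]_n) <= X)%MS) ->
  (v <= X)%MS.
Proof.
move=> h; rewrite (row_sum_delta v); apply: summx_sub => j _.
by case: (eqVneq (v 0 j) 0) => [->|/h hj]; [rewrite scale0r sub0mx | exact: scalemx_sub].
Qed.

Lemma mx11_mulE (A B : 'M[K]_1) : (A *m B) 0 0 = A 0 0 * B 0 0.
Proof. by rewrite mxE big_ord1. Qed.

End CoordinateSubspaces.

Section ModelFiliform.
Variables (K : fieldType) (p : nat).
Local Notation n := p.+3.
Implicit Types x y z u v : 'rV[K]_n.

Definition shift_mx : 'M[K]_n :=
  \matrix_(a, b) ((a.+1 == b :> nat) && (2 <= b)%N)%:R.

Definition e_last : 'rV[K]_n := delta_mx 0 ord_max.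

Lemma inord_pred (t : 'I_n) : (inord t.-1 : 'I_n) = t.-1 :> nat.
Proof. by rewrite inordK // (leq_ltn_trans (leq_pred _)). Qed.

Lemma shift_mxE x (t : 'I_n) :
  (x *m shift_mx) 0 t = (2 <= t)%N%:R * x 0 (inord t.-1).
Proof.
rewrite mxE (eq_bigr (fun c : 'I_n =>
  (c == t.-1 :> nat)%:R * ((2 <= t)%N%:R * x 0 (inord c)))); last first.
  move=> c _; rewrite mxE inord_val.
  by case: t => [[|[|t]] ht] /=; rewrite ?andbF ?andbT /=; ring.
rewrite (big_ord_indicator _ _ (fun c => (2 <= t)%N%:R * x 0 (inord c))).
case: t => [[|[|t]] ht] //=; rewrite ?mul0r ?mulr0 //.
by rewrite (ltn_trans _ ht) // mul1r.
Qed.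

Lemma sum_shift_row (F : nat -> K) (a : nat) :
  \sum_(c < n) ((a.+1 == c :> nat) && (2 <= c)%N)%:R * F c
   = ((1 <= a) && (a.+1 < n))%N%:R * F a.+1.
Proof.
rewrite (eq_bigr (fun c : 'I_n =>
  (c == a.+1 :> nat)%:R * ((1 <= a)%N%:R * F c))); last first.
  move=> c _; rewrite eq_sym; case: eqP => [->|_] /=; last by rewrite !mul0r.
  by rewrite ltnS; case: (1 <= a)%N; rewrite /=; ring.
rewrite (big_ord_indicator _ _ (fun c => (1 <= a)%N%:R * F c)).
by case: (1 <= a)%N; case: (a.+1 < n)%N; rewrite /=; ring.
Qed.

Lemma e_lastE (t : 'I_n) : e_last 0 t = (t == n.-1 :> nat)%:R.
Proof. by rewrite mxE. Qed.

Lemma e_last_lt (b : 'I_n) : (b < n.-1)%N -> e_last 0 b = 0.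
Proof. by move=> hb; rewrite e_lastE (ltn_eqF hb). Qed.

Lemma e_last_shift : e_last *m shift_mx = 0.
Proof.
apply/rowP => t; rewrite shift_mxE e_lastE inord_pred !mxE.
case: t => [[|[|t]] ht] //=; rewrite ?mul0r //.
by rewrite eqSS (_ : t == p.+1 = false) ?mulr0 //; lia.
Qed.

Lemma shift_mx00 x : (x *m shift_mx) 0 0 = 0.
Proof. by rewrite shift_mxE mul0r. Qed.

Lemma delta_shift (j : 'I_n) : (2 <= j)%N ->
  delta_mx 0 (inord j.-1) *m shift_mx = delta_mx 0 j :> 'rV[K]_n.
Proof.
move=> hj; apply/rowP => t; rewrite shift_mxE !mxE /= -!val_eqE /= !inord_pred.
by case: t => [[|[|t]] ht]; case: j hj => [[|[|j]] hj] //= _; rewrite ?mul1r ?mul0r.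
Qed.

Section CentralExtension.
Variable W : 'M[K]_n.
Hypothesis W_skew : W^T = - W.
(* With W_row0, W_cocycle says w(ad e_0 x, y) + w(x, ad e_0 y) = 0, which is
   the 2-cocycle condition for L. *)
Hypothesis W_cocycle : shift_mx *m W + W *m shift_mx^T = 0.
Hypothesis W_row0 : forall b, W 0 b = 0.
Hypothesis W_col_last : forall a, W a ord_max = 0.

Definition cform x y : K := (x *m W *m y^T) 0 0.

Definition lie_br x y : 'rV[K]_n :=
  x 0 0 *: (y *m shift_mx) - y 0 0 *: (x *m shift_mx) + cform x y *: e_last.

Lemma cform_delta a y : cform (delta_mx 0 a) y = \sum_(b < n) W a b * y 0 b.
Proof. by rewrite /cform -rowE mxE; apply: eq_bigr => b _; rewrite !mxE. Qed.

Lemma cformDl c x y z : cform (c *: x + y) z = c * cform x z + cform y z.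
Proof. by rewrite /cform !mulmxDl -!scalemxAl !mxE. Qed.

Lemma cformDr c x y z : cform z (c *: x + y) = c * cform z x + cform z y.
Proof. by rewrite /cform linearD linearZ /= mulmxDr -scalemxAr !mxE. Qed.

Lemma cformC x y : cform y x = - cform x y.
Proof.
rewrite /cform -[in LHS](trmxK (y *m W *m x^T)) [in LHS]mxE.
by rewrite !trmx_mul trmxK W_skew mulNmx mulmxN mulmxA mxE.
Qed.

Lemma cform_alt x : (2%:R : K) != 0 -> cform x x = 0.
Proof.
move=> two_neq0.
have : cform x x * 2%:R = 0 by rewrite mulr_natr mulr2n {1}cformC addNr.
by move/eqP; rewrite mulf_eq0 (negbTE two_neq0) orbF => /eqP.
Qed.

Lemma cform_shiftC u v : cform u (v *m shift_mx) = cform v (u *m shift_mx).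
Proof.
have : cform (u *m shift_mx) v + cform u (v *m shift_mx) = 0.
  transitivity ((u *m (shift_mx *m W + W *m shift_mx^T) *m v^T) 0 0).
    by rewrite mulmxDr mulmxDl mxE /cform trmx_mul !mulmxA.
  by rewrite W_cocycle mulmx0 mul0mx mxE.
by rewrite cformC addrC => /eqP; rewrite subr_eq0 => /eqP.
Qed.

Lemma mul_W_tr_last v : (forall b : 'I_n, (b < n.-1)%N -> v 0 b = 0) ->
  W *m v^T = 0.
Proof.
move=> hv; apply/matrixP => a j; rewrite !mxE big1 // => b _; rewrite !mxE.
case: (ltnP b n.-1) => hb; first by rewrite (ord1 j) hv // mulr0.
have -> : b = ord_max by apply: val_inj; have := ltn_ord b; rewrite /=; lia.
by rewrite W_col_last mul0r.
Qed.

Lemma cform_last x v : (forall b : 'I_n, (b < n.-1)%N -> v 0 b = 0) ->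
  cform x v = 0.
Proof. by move=> hv; rewrite /cform -mulmxA mul_W_tr_last // mulmx0 mxE. Qed.

Lemma lie_br00 x y : (lie_br x y) 0 0 = 0.
Proof.
move: (shift_mx00 x) (shift_mx00 y); rewrite /lie_br.
move: (x *m shift_mx) (y *m shift_mx) => X Y hX hY.
by rewrite !mxE hX hY /=; ring.
Qed.

Lemma lie_br_shift x y : lie_br x y *m shift_mx =
  x 0 0 *: (y *m shift_mx *m shift_mx) - y 0 0 *: (x *m shift_mx *m shift_mx).
Proof. by rewrite mulmxDl mulmxBl -!scalemxAl e_last_shift scaler0 addr0. Qed.

Lemma cform_lie_br z x y : cform z (lie_br x y) =
  x 0 0 * cform z (y *m shift_mx) - y 0 0 * cform z (x *m shift_mx).
Proof.
rewrite /lie_br /cform !linearD !linearN !linearZ /=.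
rewrite -(mulmxA z W e_last^T) mul_W_tr_last; last exact: e_last_lt.
by rewrite mulmx0 scaler0 addr0 !mxE; ring.
Qed.

Lemma lie_br_jacobi x y z :
  lie_br x (lie_br y z) + lie_br y (lie_br z x) + lie_br z (lie_br x y) = 0.
Proof.
rewrite {1 3 5}/lie_br !lie_br_shift !lie_br00 !cform_lie_br.
rewrite [cform z (x *m _)]cform_shiftC [cform y (x *m _)]cform_shiftC.
rewrite [cform z (y *m _)]cform_shiftC.
move: (x *m _ *m _) (y *m _ *m _) (z *m _ *m _) => A B C.
by apply/rowP => j; rewrite !mxE; ring.
Qed.

Lemma lie_br_is_lie : (2%:R : K) != 0 -> is_lie_bracket lie_br.
Proof.
move=> two_neq0; split=> [c x y z|c x y z|x|]; last exact: lie_br_jacobi.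
- rewrite /lie_br cformDl mulmxDl -scalemxAl.
  by apply/rowP => j; rewrite !mxE; ring.
- rewrite /lie_br cformDr mulmxDl -scalemxAl.
  by apply/rowP => j; rewrite !mxE; ring.
- by rewrite /lie_br cform_alt // scale0r addr0 subrr.
Qed.

Lemma lie_br_e0 y : lie_br (delta_mx 0 0) y = y *m shift_mx.
Proof.
rewrite /lie_br cform_delta big1 => [|b _]; last by rewrite W_row0 mul0r.
have -> : (delta_mx 0 0 : 'rV[K]_n) *m shift_mx = 0.
  apply/rowP => t; rewrite shift_mxE !mxE eqxx /= -val_eqE /= inord_pred.
  by case: t => [[|[|t]] ht] /=; ring.
by rewrite mxE /= scale1r scaler0 scale0r subr0 addr0.
Qed.

Lemma lie_brE x y (t : 'I_n) : (lie_br x y) 0 t =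
  x 0 0 * (y *m shift_mx) 0 t - y 0 0 * (x *m shift_mx) 0 t + cform x y * e_last 0 t.
Proof.
by rewrite /lie_br; move: (y *m shift_mx) (x *m shift_mx) e_last => Y X E; rewrite !mxE.
Qed.

Lemma lie_br_last x y : (lie_br x y) 0 ord_max =
  x 0 0 * y 0 (inord n.-2) - y 0 0 * x 0 (inord n.-2) + cform x y.
Proof. by rewrite lie_brE !shift_mxE e_lastE /= eqxx /=; ring. Qed.

Lemma lie_br_coord_lt2 x y (t : 'I_n) : (t < 2)%N -> (lie_br x y) 0 t = 0.
Proof.
move=> ht; rewrite lie_brE !shift_mxE e_lastE.
by rewrite (_ : (2 <= t)%N = false) 1?(_ : (t == n.-1 :> nat) = false) /=; [ring|lia|lia].
Qed.

Lemma lie_br_coord_le k x v (t : 'I_n) : (0 < k)%N -> (t <= k)%N ->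
  (forall s : 'I_n, (s < k)%N -> v 0 s = 0) -> (lie_br x v) 0 t = 0.
Proof.
move=> hk htk hv; case: (ltnP t 2) => ht2; first exact: lie_br_coord_lt2.
rewrite lie_brE !shift_mxE e_lastE hv ?inord_pred; last by lia.
rewrite (hv 0) //; case: eqP => [htn|_]; last by rewrite /=; ring.
rewrite cform_last; first by rewrite /=; ring.
by move=> b hb; apply: hv; lia.
Qed.

Lemma bracket_space_sub (A X : 'M[K]_n) :
  (forall a j : 'I_n, (lie_br (delta_mx 0 a) (row j A) <= X)%MS) ->
  (bracket_space lie_br A <= X)%MS.
Proof.
by move=> h; apply/sumsmx_subP => a _; apply/sumsmx_subP => j _; rewrite genmxE h.
Qed.

Lemma shift_sub_bracket_space (A : 'M[K]_n) :
  (A *m shift_mx <= bracket_space lie_br A)%MS.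
Proof.
apply/row_subP => r; rewrite row_mul -lie_br_e0.
by apply: (sumsmx_sup 0) => //; apply: (sumsmx_sup r) => //; rewrite genmxE.
Qed.

Lemma bracket_space_sub_copid2 (A : 'M[K]_n) :
  (bracket_space lie_br A <= copid_mx 2)%MS.
Proof.
by apply: bracket_space_sub => a j; apply/sub_copid_mxP => // t; exact: lie_br_coord_lt2.
Qed.

Lemma bracket_space_sub_copid k (A : 'M[K]_n) : (0 < k)%N -> (k < n)%N ->
  (A <= copid_mx k)%MS -> (bracket_space lie_br A <= copid_mx k.+1)%MS.
Proof.
move=> hk hkn sA; apply: bracket_space_sub => a j; apply/sub_copid_mxP => // t ht.
apply: (lie_br_coord_le _ hk ht); apply/sub_copid_mxP; first exact: ltnW.
exact: submx_trans (row_sub _ _) sA.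
Qed.

Lemma copid_sub_bracket_space k (A : 'M[K]_n) : (2 <= k <= n)%N ->
  (copid_mx k.-1 <= A)%MS -> (copid_mx k <= bracket_space lie_br A)%MS.
Proof.
case/andP=> hk hkn sA; apply/row_subP => r; apply: support_submx => j hj.
have hkj : (k <= j)%N.
  have /(sub_copid_mxP _ hkn) row_low := row_sub r (copid_mx k : 'M[K]_n).
  by rewrite leqNgt; apply/negP => /row_low; apply/eqP.
rewrite -delta_shift; last exact: leq_trans hkj.
apply: submx_trans (shift_sub_bracket_space A); apply: submxMr.
by apply: submx_trans sA; apply: delta_sub_copid_mx; rewrite ?inord_pred; lia.
Qed.

Lemma lcs_copid d : (d.+2 <= n)%N -> (lcs lie_br d.+2 == copid_mx d.+2)%MS.
Proof.
elim: d => [|d IH] hd.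
  apply/andP; split; first exact: bracket_space_sub_copid2.
  by apply: copid_sub_bracket_space => //; exact: submx1.
case/andP: (IH (ltnW hd)) => sub1 sub2; apply/andP; split.
  exact: bracket_space_sub_copid.
exact: copid_sub_bracket_space.
Qed.

Lemma lie_br_filiform : filiform lie_br.
Proof.
have rank_lcs k : (2 <= k <= n)%N -> \rank (lcs lie_br k) = (n - k)%N.
  case: k => [|[|d]] // /andP [_ hd].
  by rewrite (eqmx_rank (lcs_copid hd)) rank_copid_mx.
split; last exact: rank_lcs.
by exists n; rewrite rank_lcs; lia.
Qed.

Local Notation e_first := (delta_mx 0 0 : 'cV[K]_n).

Definition form_mx (l : 'cV[K]_n) : 'M[K]_n :=
  e_first *m (shift_mx *m l)^T - (shift_mx *m l) *m e_first^T + (e_last *m l) 0 0 *: W.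

Lemma lie_br_formE x y l : (lie_br x y *m l) 0 0 = (x *m form_mx l *m y^T) 0 0.
Proof.
have xe x' : (x' *m e_first) 0 0 = x' 0 0 by rewrite -colE mxE.
have R1 : (x *m (e_first *m (shift_mx *m l)^T) *m y^T) 0 0
          = x 0 0 * (y *m shift_mx *m l) 0 0.
  by rewrite -!mulmxA (mulmxA x) mx11_mulE xe -trmx_mul mxE !mulmxA.
have R2 : (x *m ((shift_mx *m l) *m e_first^T) *m y^T) 0 0
          = (x *m shift_mx *m l) 0 0 * y 0 0.
  rewrite !mulmxA -(mulmxA (x *m shift_mx *m l)) mx11_mulE -trmx_mul.
  by rewrite [(y *m e_first)^T 0 0]mxE xe.
have R3 : (x *m ((e_last *m l) 0 0 *: W) *m y^T) 0 0 = (e_last *m l) 0 0 * cform x y.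
  by rewrite -scalemxAr -scalemxAl mxE.
rewrite /form_mx mulmxDr mulmxBr mulmxDl mulmxBl.
move: R1 R2 R3; move: (x *m (e_first *m _) *m y^T) (x *m (_ *m e_first^T) *m y^T).
move: (x *m (_ *: W) *m y^T) => P Q R R1 R2 R3.
rewrite /lie_br mulmxDl mulmxBl -!scalemxAl.
move: (y *m shift_mx *m l) (x *m shift_mx *m l) (e_last *m l) R1 R2 R3 => A B C R1 R2 R3.
by rewrite !mxE R1 R2 R3; ring.
Qed.

Lemma stab_kerE l y : (forall x, lie_br x y *m l = 0) <-> y *m (form_mx l)^T = 0.
Proof.
split=> [h|h x].
  apply: trmx_inj; rewrite trmx_mul trmxK trmx0; apply/colP => a; rewrite [RHS]mxE.
  have := h (delta_mx 0 a); move/(congr1 (fun M : 'M[K]_1 => M 0 0)).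
  by rewrite lie_br_formE -mulmxA -rowE mxE => ->; rewrite mxE.
apply/matrixP => i j; rewrite !ord1 lie_br_formE -mulmxA.
by rewrite -[form_mx l *m _]trmxK trmx_mul trmxK h trmx0 mulmx0 !mxE.
Qed.

Lemma stab_dim_ker l : stab_dim lie_br l (\rank (kermx (form_mx l)^T)).
Proof.
exists (kermx (form_mx l)^T); split=> // y.
by split=> [/sub_kermxP/stab_kerE|/stab_kerE/sub_kermxP].
Qed.

Lemma stab_dimE l d : stab_dim lie_br l d -> d = \rank (kermx (form_mx l)^T).
Proof.
case=> S [hS <-]; apply/eqmx_rank/andP; split; apply/row_subP => r.
  by apply/sub_kermxP/stab_kerE/hS; exact: row_sub.
by apply/hS/stab_kerE/sub_kermxP; exact: row_sub.
Qed.

Lemma rank_form_mx l : (\rank (form_mx l) <= (\rank W).+2)%N.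
Proof.
have rank_low : (\rank (e_first *m (shift_mx *m l)^T - (shift_mx *m l) *m e_first^T)%R <= 2)%N.
  apply: leq_trans (mxrank_add _ _) _; apply: (@leq_add _ _ 1 1).
    exact: leq_trans (mxrankM_maxl _ _) (rank_leq_col _).
  by rewrite mxrank_opp; exact: leq_trans (mxrankM_maxr _ _) (rank_leq_row _).
have rank_W : (\rank ((e_last *m l) 0 0 *: W)%R <= \rank W)%N.
  by rewrite -mul_scalar_mx mxrankM_maxr.
by apply: leq_trans (mxrank_add _ _) _; lia.
Qed.

Lemma stab_dim_ge l d : stab_dim lie_br l d -> (n - (\rank W).+2 <= d)%N.
Proof.
move/stab_dimE => ->; rewrite mxrank_ker mxrank_tr.
by apply: leq_sub2l; exact: rank_form_mx.
Qed.

End CentralExtension.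

Section Cocycle.
Variable m : nat.
Hypothesis m_gt0 : (0 < m)%N.
Hypothesis m2_lt : (m.*2 < n)%N.

Definition cocycle_entry (a b : nat) : K :=
  if [&& 0 < a, 0 < b & a + b == m.*2.-1]%N then (-1) ^+ a else 0.

Definition cocycle_mx : 'M[K]_n := \matrix_(a, b) cocycle_entry a b.

Local Notation br := (lie_br cocycle_mx).

Lemma cocycle_entryC a b : cocycle_entry b a = - cocycle_entry a b.
Proof.
rewrite /cocycle_entry addnC; case: (0 < a)%N; case: (0 < b)%N; rewrite /= ?oppr0 //.
case: eqP => [sum_ab|_]; last by rewrite oppr0.
have : odd (a + b) by rewrite sum_ab; case: m m_gt0 => // m' _; rewrite doubleS /= odd_double.
rewrite oddD -(signr_odd _ b) -(signr_odd _ a).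
by case: (odd a); case: (odd b) => //= _; rewrite ?expr1 ?expr0 ?opprK.
Qed.

Lemma cocycle_mx_skew : cocycle_mx^T = - cocycle_mx.
Proof. by apply/matrixP => a b; rewrite !mxE cocycle_entryC. Qed.

Lemma cocycle_mx_row0 b : cocycle_mx 0 b = 0.
Proof. by rewrite mxE. Qed.

Lemma cocycle_mx_col_last a : cocycle_mx a ord_max = 0.
Proof.
rewrite mxE /cocycle_entry; case: ifP => // /and3P [_ _ /eqP].
by move: (ltn_ord a) m2_lt; rewrite /=; lia.
Qed.

Lemma cocycle_mx_cocycle :
  shift_mx *m cocycle_mx + cocycle_mx *m shift_mx^T = 0.
Proof.
apply/matrixP => a b; rewrite !mxE.
under eq_bigr => c _ do rewrite !mxE.
under [X in _ + X]eq_bigr => c _ do rewrite !mxE mulrC.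
rewrite (sum_shift_row (fun c => cocycle_entry c b)).
rewrite (sum_shift_row (fun c => cocycle_entry a c)) /cocycle_entry /= addnS addSn.
case: eqP => [sum_ab|_]; last by rewrite !andbF !mulr0 addr0.
rewrite (_ : (a.+1 < n)%N) 1?(_ : (b.+1 < n)%N) /= ?andbT; try lia.
case: (0 < a)%N; case: (0 < b)%N; rewrite /= ?mul0r ?mulr0 ?addr0 //.
by rewrite exprS; ring.
Qed.

Lemma cocycle_mx_factor : cocycle_mx =
  (\matrix_(a < n, k < m.*2.-2) (a == k.+1 :> nat)%:R)
    *m \matrix_(k < m.*2.-2, b < n) cocycle_entry k.+1 b.
Proof.
apply/matrixP => a b; rewrite !mxE.
rewrite (eq_bigr (fun k : 'I_ _ => (k == a.-1 :> nat)%:R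
                   * ((0 < a)%N%:R * cocycle_entry k.+1 b))); last first.
  move=> k _; rewrite !mxE; case: a => [[|a] ha] /=; first by rewrite !mul0r mulr0.
  by rewrite eqSS eq_sym; ring.
rewrite (big_ord_indicator _ _ (fun k => (0 < a)%N%:R * cocycle_entry k.+1 b)).
case: a => [[|a] ha] /=; first by rewrite /cocycle_entry /= mul0r mulr0.
case: (ltnP a m.*2.-2) => ha2; first by rewrite !mul1r.
rewrite mul0r /cocycle_entry; case: ifP => // /and3P [_ hb /eqP].
by move: ha2 hb; lia.
Qed.

Lemma rank_cocycle_mx : (\rank cocycle_mx <= m.*2.-2)%N.
Proof. by rewrite cocycle_mx_factor (leq_trans (mxrankM_maxl _ _)) ?rank_leq_col. Qed.

Lemma cform_cocycle_delta (a b : 'I_n) y : (0 < a)%N -> (0 < b)%N ->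
  (a + b)%N = m.*2.-1 -> cform cocycle_mx (delta_mx 0 a) y = (-1) ^+ a * y 0 b.
Proof.
move=> ha hb hab; rewrite cform_delta (bigD1 b) //= big1 ?addr0.
  by rewrite mxE /cocycle_entry ha hb hab eqxx.
move=> c hcb; rewrite mxE /cocycle_entry; case: ifP => [/and3P [_ _ /eqP hac]|_].
  by move: hcb; rewrite (_ : c = b) ?eqxx //; apply: val_inj => /=; lia.
by rewrite mul0r.
Qed.

Lemma cform_cocycle_delta_eq0 (a : 'I_n) y : (m.*2.-2 < a)%N ->
  cform cocycle_mx (delta_mx 0 a) y = 0.
Proof.
move=> ha; rewrite cform_delta big1 // => b _.
rewrite mxE /cocycle_entry; case: ifP => [/and3P [_ hb /eqP hab]|_]; last by rewrite mul0r.
by move: ha hb hab; lia.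
Qed.

Lemma stab_last_support y : (forall x, (br x y) 0 ord_max = 0) ->
  forall j : 'I_n, y 0 j != 0 -> (m.*2.-2 < j)%N && (j != n.-2 :> nat).
Proof.
move=> stab j yj.
(* Testing against x = e_0, e_{n-2} and e_{2m-1-j} isolates y_{n-2}, y_0 and y_j. *)
have y_top2 : y 0 (inord n.-2) = 0.
  have := stab (delta_mx 0 0); rewrite (lie_br_e0 cocycle_mx_row0) shift_mxE /=.
  by rewrite mul1r.
have y0 : y 0 0 = 0.
  have := stab (delta_mx 0 (inord n.-2)).
  rewrite lie_br_last cform_cocycle_delta_eq0; last by rewrite inordK //; lia.
  rewrite !mxE eqxx -!val_eqE /= inordK //= eqxx mul0r mulr1 add0r addr0.
  by move/eqP; rewrite oppr_eq0 => /eqP.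
apply/andP; split; last first.
  apply: contra_neq yj => j_top2; rewrite (_ : j = inord n.-2) //.
  by apply: val_inj; rewrite /= inordK.
rewrite ltnNge; apply: contraNN yj => j_le; apply/eqP.
case: (posnP j) => [j0|j_pos]; first by rewrite (_ : j = 0) //; exact: val_inj.
pose a : 'I_n := inord (m.*2.-1 - j).
have a_val : a = (m.*2.-1 - j)%N :> nat by rewrite inordK //; lia.
have := stab (delta_mx 0 a).
rewrite lie_br_last (cform_cocycle_delta (b := j)) ?a_val //; try lia.
rewrite y0 !mxE eqxx -val_eqE /= a_val.
rewrite (_ : (0 == m.*2.-1 - j)%N = false) /=; last by lia.
by rewrite !mul0r subrr add0r => /eqP; rewrite mulf_eq0 signr_eq0 => /eqP.
Qed.

Definition stab_last_index (k : nat) : nat :=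
  if (k < n - m.*2 - 1)%N then (m.*2.-1 + k)%N else n.-1.

Definition stab_last_span : 'M[K]_(n - m.*2, n) :=
  \matrix_(k, j) (j == stab_last_index k :> nat)%:R.

Lemma delta_sub_stab_last_span (j : 'I_n) : (m.*2.-2 < j)%N -> (j != n.-2 :> nat) ->
  ((delta_mx 0 j : 'rV[K]_n) <= stab_last_span)%MS.
Proof.
move=> j_gt j_top2.
have [k kj] : exists k : 'I_(n - m.*2), stab_last_index k = j.
  have j_lt := ltn_ord j.
  case: (eqVneq (j : nat) n.-1) => j_top.
    have k_lt : ((n - m.*2).-1 < n - m.*2)%N by lia.
    by exists (Ordinal k_lt); rewrite /stab_last_index /= ifF ?j_top //; lia.
  have k_lt : (j - m.*2.-1 < n - m.*2)%N by lia.
  by exists (Ordinal k_lt); rewrite /stab_last_index /= ifT; lia.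
have -> : delta_mx 0 j = row k stab_last_span by apply/rowP => t; rewrite !mxE kj.
exact: row_sub.
Qed.

Lemma rank_stab_last :
  (\rank (kermx (form_mx cocycle_mx e_last^T)^T) <= n - m.*2)%N.
Proof.
apply: leq_trans (mxrankS (_ : _ <= stab_last_span)%MS) (rank_leq_row _).
apply/row_subP => r; apply: support_submx => j yj.
have stab x : (br x (row r (kermx (form_mx cocycle_mx e_last^T)^T))) 0 ord_max = 0.
  have /sub_kermxP/stab_kerE/(_ x) := row_sub r (kermx (form_mx cocycle_mx e_last^T)^T).
  by rewrite trmx_delta -colE => /(congr1 (fun c : 'cV[K]_1 => c 0 0)); rewrite !mxE.
by case/andP: (stab_last_support stab yj); exact: delta_sub_stab_last_span.
Qed.

Lemma cocycle_chi : chi_eq br (n - m.*2).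
Proof.
have stab_ge l d : stab_dim br l d -> (n - m.*2 <= d)%N.
  by move/stab_dim_ge; have := rank_cocycle_mx; lia.
split; last exact: stab_ge.
exists e_last^T; have stab_ker := stab_dim_ker cocycle_mx e_last^T.
suff <- : \rank (kermx (form_mx cocycle_mx e_last^T)^T) = (n - m.*2)%N by [].
by apply/eqP; rewrite eqn_leq rank_stab_last (stab_ge _ _ stab_ker).
Qed.

End Cocycle.
End ModelFiliform.

Theorem corollary6p8 (K : fieldType) (n i : nat) :
  [pchar K] =i pred0 ->
  (3 <= n)%N ->
  (1 <= i)%N -> (i <= n - 2)%N -> odd i = odd n ->
  exists br : 'rV[K]_n -> 'rV[K]_n -> 'rV[K]_n,
    is_lie_bracket br /\ filiform br /\ chi_eq br i.
Proof.
move=> charK0 n_ge3 i_gt0 i_le odd_in.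
case: n n_ge3 i_le odd_in => [|[|[|p]]] // _ i_le odd_in.
set m := ((p.+3 - i)./2)%N.
have m2E : m.*2 = (p.+3 - i)%N.
  have even_ni : odd (p.+3 - i) = false by rewrite oddB ?odd_in ?addbb //; lia.
  by have := odd_double_half (p.+3 - i); rewrite even_ni add0n.
have m_gt0 : (0 < m)%N by lia.
have m2_lt : (m.*2 < p.+3)%N by lia.
have two_neq0 : (2%:R : K) != 0 by move/pcharf0P: charK0 => ->.
exists (lie_br (cocycle_mx K p m)); split.
  apply: lie_br_is_lie two_neq0; [exact: cocycle_mx_skew | exact: cocycle_mx_cocycle |].
  exact: cocycle_mx_col_last.
split; first by apply: lie_br_filiform; [exact: cocycle_mx_row0 | exact: cocycle_mx_col_last].
by rewrite (_ : i = p.+3 - m.*2)%N; [exact: cocycle_chi | lia].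
Qed.
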